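(* Consider a stochastic block model graph with parameters $N_0,N_1\ge2$, $r,q\in(0,1)$ and label rate $\beta\in(0,1)$. Let $\sigma_1\ge0$ and $0\le\sigma_2<1$. Then with probability at least $$1-\sum_{j=0}^1N_j\left\{\exp\!\Big(-\frac{qN_{1-j}\sigma_1^2}{2(1+\frac13\sigma_1)}\Big)+3\exp\!\Big(-\frac18\beta rN_j\sigma_2^2\Big)\right\},$$ for every $j\in\{0,1\}$ and every $x_i\in\mathcal X_j$ we have $$\gamma_i\le\frac{(1+\sigma_1)qN_{1-j}}{(1+\sigma_1)qN_{1-j}+(1-\sigma_2)r(N_j-1)}\quad\text{and}\quad \beta_i\ge\frac{1-\sigma_2}{1+\sigma_2}\beta.$$
   Context: Stochastic block model (SBM): the vertex set $\mathcal X=\{x_1,\dots,x_n\}$ is partitioned as $\mathcal X=\mathcal X_0\cup\mathcal X_1$ with $|\mathcal X_0|=N_0$, $|\mathcal X_1|=N_1$, $n=N_0+N_1$ (the true label $g(x)=j$ for $x\in\mathcal X_j$). Edge weights are binary, $w_{xy}=w_{yx}\in\{0,1\}$, no self-loops, and for distinct pairs the edges are independent with $\mathbb P(w_{xy}=1)=r$ if $x,y$ lie in the same block and $\mathbb P(w_{xy}=1)=q$ if they lie in different blocks. Independently, each vertex is labeled (placed in $\Gamma$) with probability $\beta$, independently across vertices. For $x_i\in\mathcal X_j$: $$\gamma_i=\frac{\sum_{x\in\mathcal X_{1-j}}w_{x_ix}}{\sum_{x\in\mathcal X}w_{x_ix}},\qquad \beta_i=\frac{\sum_{x\in\mathcal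 X_j\cap\Gamma}w_{x_ix}}{\sum_{x\in\mathcal X_j}w_{x_ix}}.$$ *)

From HB Require Import structures.
From mathcomp Require Import all_boot all_order all_algebra.
From mathcomp Require Import all_classical all_reals all_analysis.
Set Implicit Arguments. Unset Strict Implicit. Unset Printing Implicit Defensive.
Import Order.TTheory GRing.Theory Num.Theory.
Local Open Scope ring_scope.

(* Vertices of the SBM: 'I_(N0 + N1).  Vertex x lies in block X_1 iff N0 <= x,
   i.e. X_0 = {0,...,N0-1}, X_1 = {N0,...,N0+N1-1}.  Blocks are indexed by bool
   (false = 0, true = 1). *)
Definition blk (N0 N1 : nat) (x : 'I_(N0 + N1)) : bool := (N0 <= x)%N.

Definition Nb (N0 N1 : nat) (j : bool) : nat := if j then N1 else N0.

(* Sample space: an edge-coin for every ordered pair (only pairs (x,y) with x<y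
   are used; the others are forced to false by the mass) and the labeled set Gamma. *)
Definition Omega (n : nat) : finType :=
  ({ffun 'I_n * 'I_n -> bool} * {set 'I_n})%type.

Definition edge (n : nat) (om : Omega n) (x y : 'I_n) : bool :=
  if (x < y)%N then om.1 (x, y) else if (y < x)%N then om.1 (y, x) else false.

Definition wt (R : ringType) (n : nat) (om : Omega n) (x y : 'I_n) : R :=
  (edge om x y)%:R.

Definition sbm_mass (R : ringType) (N0 N1 : nat) (r q beta : R)
  (om : Omega (N0 + N1)) : R :=
  (\prod_(p : 'I_(N0 + N1) * 'I_(N0 + N1))
     (if (p.1 < p.2)%N then
        let pr := if blk p.1 == blk p.2 then r else q in
        (if om.1 p then pr else 1 - pr)
      else (if om.1 p then 0 else 1)))
  * \prod_(x : 'I_(N0 + N1)) (if x \in om.2 then beta else 1 - beta).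

Definition sbm_prob (R : ringType) (N0 N1 : nat) (r q beta : R)
  (E : pred (Omega (N0 + N1))) : R :=
  \sum_(om | E om) sbm_mass r q beta om.

Definition gammai (R : fieldType) (N0 N1 : nat) (om : Omega (N0 + N1))
  (x : 'I_(N0 + N1)) : R :=
  (\sum_(y | blk y != blk x) wt R om x y) / (\sum_y wt R om x y).

Definition betai (R : fieldType) (N0 N1 : nat) (om : Omega (N0 + N1))
  (x : 'I_(N0 + N1)) : R :=
  (\sum_(y | (blk y == blk x) && (y \in om.2)) wt R om x y)
  / (\sum_(y | blk y == blk x) wt R om x y).

From HB Require Import structures.
From mathcomp Require Import all_boot all_order all_algebra.
From mathcomp Require Import all_classical all_reals all_analysis.
From mathcomp Require Import ring lra.
Set Implicit Arguments. Unset Strict Implicit. Unset Printing Implicit Defensive.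
Import Order.TTheory GRing.Theory Num.Theory.
Local Open Scope ring_scope.

(* Each gamma_i and beta_i is a ratio of three neighbour counts of x_i: its
   neighbours in the other block, in its own block, and the labeled ones in its
   own block.  The edge coins and the labels are independent, so each count is a
   sum of independent Bernoulli variables; its moment generating function is at
   most exp((e^s - 1) mu), and Chernoff's method bounds its upper tail by
   exp(- mu d^2 / (2 (1 + d/3))) and its lower tail by exp(- mu d^2 / 4).
   Outside the four resulting tail events both ratio bounds follow by
   monotonicity.  The three within-block means are at least beta r N_j / 2 and
   sigma_2 < 1, which turns the three within-block tails into
   3 exp(- beta r N_j sigma_2^2 / 8); a union bound over the vertices ends the
   proof. *)

Lemma leq_2_exp3_factSS k : (2 * 3 ^ k <= k.+2`!)%N.
Proof. by elim: k => // k IH; rewrite factS expnS mulnCA leq_mul. Qed.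

Section ExpBounds.
Context {R : realType}.
Implicit Types t : R.

Lemma exp_coeffSS_le t k : 0 <= t ->
  exp_coeff t k.+2 <= geometric (t ^+ 2 / 2) (t / 3) k.
Proof.
move=> t_ge0; rewrite /exp_coeff /geometric /= expr_div_n mulrACA -invfM.
rewrite -natrX -natrM -exprD add2n ler_wpM2l ?exprn_ge0 //.
rewrite lef_pV2 ?posrE ?ltr0n ?fact_gt0 ?muln_gt0 ?expn_gt0 //.
by rewrite ler_nat leq_2_exp3_factSS.
Qed.

Lemma expR_le_Bernstein t : 0 <= t < 3 ->
  expR t <= 1 + t + t ^+ 2 / (2 * (1 - t / 3)).
Proof.
case/andP=> t_ge0 t_lt3; have [->|t_neq0] := eqVneq t 0.
  by rewrite expR0 expr0n /= mul0r !addr0.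
have t_gt0 : 0 < t by rewrite lt_def t_neq0.
have exp_coeff_ge0 k : 0 <= exp_coeff t k.
  by rewrite /exp_coeff /= divr_ge0 ?exprn_ge0.
rewrite /expR; apply: limr_le; first exact: is_cvg_series_exp_coeff.
near=> n; apply: (@le_trans _ _ (series (exp_coeff t) n.+2)).
  by apply: nondecreasing_series => [k _ _|]; [exact: exp_coeff_ge0 | exact: leqW].
rewrite /series /= !big_nat_recl // /exp_coeff /= expr0 expr1 !divr1 addrA lerD2l.
apply: le_trans (_ : series (geometric (t ^+ 2 / 2) (t / 3)) n <= _).
  by apply: ler_sum => k _; exact: exp_coeffSS_le.
rewrite invfM mulrA; apply: geometric_le_lim; rewrite ?divr_ge0 ?exprn_ge0 //.
  by rewrite divr_gt0.
by rewrite ger0_norm ?divr_ge0 // ltr_pdivrMr //; lra.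
Unshelve. all: by end_near.
Qed.

Lemma expRN_le t : 0 <= t -> expR (- t) <= 1 - t + t ^+ 2.
Proof.
move=> t_ge0; rewrite expRN.
apply: (@le_trans _ _ (1 + t)^-1).
  by rewrite lef_pV2 ?posrE ?expR_gt0 ?expR_ge1Dx //; lra.
rewrite -div1r ler_pdivrMr; last lra.
by rewrite -subr_ge0 (_ : _ - _ = t ^+ 3); [rewrite exprn_ge0 | ring].
Qed.
End ExpBounds.

Section FiniteMass.
Variables (R : realType) (T : finType) (m : T -> R).
Hypothesis m_ge0 : forall t, 0 <= m t.

Lemma sum_mass_ind (E : pred T) : \sum_(t | E t) m t = \sum_t m t * (E t)%:R.
Proof.
by rewrite big_mkcond; apply: eq_bigr => t _; case: (E t); rewrite ?mulr1 ?mulr0.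
Qed.

Lemma sum_mass_subset (E F : pred T) : (forall t, E t -> F t) ->
  \sum_(t | E t) m t <= \sum_(t | F t) m t.
Proof.
move=> EF; rewrite !sum_mass_ind; apply: ler_sum => t _.
by apply: ler_wpM2l => //; case: (E t) (EF t) => [->|] // _; rewrite ler_nat leq_b1.
Qed.

Lemma markov (E : pred T) (F : T -> R) :
  (forall t, 0 <= F t) -> (forall t, E t -> 1 <= F t) ->
  \sum_(t | E t) m t <= \sum_t m t * F t.
Proof.
move=> F_ge0 EF; rewrite sum_mass_ind; apply: ler_sum => t _.
by apply: ler_wpM2l => //; case: (E t) (EF t) => [/(_ isT)|].
Qed.

Lemma sum_mass_orU (E F : pred T) :
  \sum_(t | E t || F t) m t <= \sum_(t | E t) m t + \sum_(t | F t) m t.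
Proof.
rewrite (bigID E) /=; apply: lerD; apply: sum_mass_subset => t /andP[] //.
by case: (E t).
Qed.

Lemma sum_mass_existsU (I : finType) (E : I -> pred T) :
  \sum_(t | [exists i, E i t]) m t <= \sum_i \sum_(t | E i t) m t.
Proof.
under [leRHS]eq_bigr => i _ do rewrite sum_mass_ind.
rewrite exchange_big /=; under [leRHS]eq_bigr => t _ do rewrite -mulr_sumr.
apply: markov => [t|t /existsP[i Eit]]; first by apply: sumr_ge0 => i _.
by rewrite (bigD1 i) //= Eit lerDl sumr_ge0.
Qed.

Section Chernoff.
Variables (Z : T -> R) (mu : R).
Hypothesis mu_ge0 : 0 <= mu.
Hypothesis mgf_le : forall s, \sum_t m t * expR (s * Z t) <= expR ((expR s - 1) * mu).

Lemma chernoff (E : pred T) s a : (forall t, E t -> s * a <= s * Z t) ->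
  \sum_(t | E t) m t <= expR ((expR s - 1) * mu - s * a).
Proof.
move=> EZ; apply: le_trans (@markov E (fun t => expR (s * Z t - s * a)) _ _) _.
- by move=> t; exact: expR_ge0.
- by move=> t /EZ sZ; rewrite (le_trans _ (expR_ge1Dx _)) // lerDl subr_ge0.
under eq_bigr => t _ do rewrite expRD mulrA.
by rewrite -mulr_suml expRD ler_wpM2r ?expR_ge0.
Qed.

Lemma chernoff_upper d : 0 <= d ->
  \sum_(t | (1 + d) * mu <= Z t) m t <= expR (- (mu * d ^+ 2 / (2 * (1 + d / 3)))).
Proof.
move=> d_ge0; pose s := 3 * d / (3 + d).
have s_range : 0 <= s < 3.
  by rewrite divr_ge0 ?ltr_pdivrMr /=; lra.
apply: le_trans (@chernoff _ s ((1 + d) * mu) _) _ => [t Zt|].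
  by apply: ler_wpM2l Zt; case/andP: s_range.
have := ler_wpM2r mu_ge0 (expR_le_Bernstein s_range).
have <- : (s + s ^+ 2 / (2 * (1 - s / 3))) * mu - s * ((1 + d) * mu) =
    - (mu * d ^+ 2 / (2 * (1 + d / 3))).
  by rewrite /s; field; lra.
rewrite ler_expR; lra.
Qed.

Lemma chernoff_lower d : 0 <= d ->
  \sum_(t | Z t <= (1 - d) * mu) m t <= expR (- (mu * d ^+ 2 / 4)).
Proof.
move=> d_ge0; apply: le_trans (@chernoff _ (- (d / 2)) ((1 - d) * mu) _) _ => [t Zt|].
  by rewrite !mulNr lerN2 ler_wpM2l //; lra.
have d2_ge0 : 0 <= d / 2 by lra.
have := ler_wpM2r mu_ge0 (expRN_le d2_ge0).
rewrite ler_expR; lra.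
Qed.
End Chernoff.
End FiniteMass.

Lemma sum_set_prod (R : comPzSemiRingType) (I : finType) (F : I -> bool -> R) :
  \sum_(S : {set I}) \prod_i F i (i \in S) = \prod_i \sum_b F i b.
Proof.
rewrite bigA_distr_bigA (reindex (fun g : {ffun I -> bool} => [set i | g i])) /=.
  by apply: eq_bigr => g _; apply: eq_bigr => i _; rewrite inE.
apply: onW_bij; exists (fun S : {set I} => [ffun i => i \in S]) => [g|S].
  by apply/ffunP => i; rewrite ffunE inE.
by apply/setP => i; rewrite inE ffunE.
Qed.

Section SBM.
Variables (R : realType) (N0 N1 : nat) (r q beta : R).
Local Notation V := 'I_(N0 + N1).
Local Notation Om := (Omega (N0 + N1)).

Definition bernoulli_w (p : R) (b : bool) : R := if b then p else 1 - p.

Definition edge_prob (x y : V) : R := if blk x == blk y then r else q.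

Definition coin_w (p : V * V) (b : bool) : R :=
  if (p.1 < p.2)%N then bernoulli_w (edge_prob p.1 p.2) b else if b then 0 else 1.

Lemma sbm_massE (om : Om) : sbm_mass r q beta om =
  (\prod_p coin_w p (om.1 p)) * \prod_y bernoulli_w beta (y \in om.2).
Proof. by []. Qed.

Definition incident (x : V) (psi : V -> bool -> R) (p : V * V) (b : bool) : R :=
  if (p.1 < p.2)%N then
    (if p.1 == x then psi p.2 b else if p.2 == x then psi p.1 b else 1)
  else 1.

Lemma prod_incident (om : Om) (x : V) (psi : V -> bool -> R) :
  \prod_(y | y != x) psi y (edge om x y) = \prod_p incident x psi p (om.1 p).
Proof.
transitivity (\prod_i \prod_j incident x psi (i, j) (om.1 (i, j))); last first.
  by rewrite pair_bigA; apply: eq_bigr => -[].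
rewrite [RHS](bigD1 x) //=.
have row_x : \prod_j incident x psi (x, j) (om.1 (x, j)) =
    \prod_(j | j != x) (if (x < j)%N then psi j (om.1 (x, j)) else 1).
  rewrite (bigD1 x) //= {1}/incident ltnn mul1r.
  by apply: eq_bigr => j _; rewrite /incident eqxx.
have row_i i : i != x -> \prod_j incident x psi (i, j) (om.1 (i, j)) =
    (if (i < x)%N then psi i (om.1 (i, x)) else 1).
  move=> ix; rewrite (bigD1 x) //= big1 ?mulr1 => [|j jx].
    by rewrite /incident /= (negbTE ix) eqxx.
  by rewrite /incident /= (negbTE ix) (negbTE jx); case: ifP.
rewrite row_x (eq_bigr _ row_i) -big_split /=; apply: eq_bigr => y yx.
rewrite /edge; case: ltngtP => [||/val_inj yx']; rewrite ?mulr1 ?mul1r //.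
by rewrite yx' eqxx in yx.
Qed.

Lemma sum_coins_incident (x : V) (psi : V -> bool -> R) :
  \sum_(f : {ffun V * V -> bool}) \prod_p (coin_w p (f p) * incident x psi p (f p))
  = \prod_(y | y != x) \sum_e bernoulli_w (edge_prob x y) e * psi y e.
Proof.
rewrite -(bigA_distr_bigA (fun p b => coin_w p b * incident x psi p b)) /=.
(* [prod_incident] backwards: the factors no longer depend on the coins, so any
   outcome will do. *)
rewrite (prod_incident (([ffun=> false], finset.set0) : Om) x
  (fun y _ => \sum_e bernoulli_w (edge_prob x y) e * psi y e)).
apply: eq_bigr => -[a b] _; rewrite big_bool /coin_w /incident /=.
case: ltnP => _; last by rewrite mul0r mul1r add0r.
case: eqVneq => [->|_]; first by rewrite big_bool.
case: eqVneq => [->|_]; first by rewrite big_bool /edge_prob eq_sym.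
by rewrite !mulr1 addrC subrK.
Qed.

Lemma sum_bernoulli_w p : \sum_b bernoulli_w p b = 1.
Proof. by rewrite big_bool /= addrC subrK. Qed.

Lemma sbm_expect_prod (x : V) (phi : V -> bool -> bool -> R) :
  \sum_om sbm_mass r q beta om * \prod_(y | y != x) phi y (edge om x y) (y \in om.2)
  = \prod_(y | y != x) \sum_e \sum_s
      bernoulli_w (edge_prob x y) e * bernoulli_w beta s * phi y e s.
Proof.
pose L y s := \sum_e bernoulli_w (edge_prob x y) e * phi y e s.
pose G y s := bernoulli_w beta s * (if y != x then L y s else 1).
have sum_coins S : \sum_(f : {ffun V * V -> bool})
    sbm_mass r q beta (f, S) * \prod_(y | y != x) phi y (edge (f, S) x y) (y \in S)
    = \prod_y G y (y \in S).
  rewrite big_split /= -big_mkcond /=.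
  rewrite -(sum_coins_incident x (fun y e => phi y e (y \in S))) mulr_sumr.
  apply: eq_bigr => f _.
  rewrite sbm_massE (prod_incident (f, S) x (fun y e => phi y e (y \in S))).
  by rewrite big_split /=; ring.
transitivity (\sum_(S : {set V}) \prod_y G y (y \in S)).
  rewrite -(eq_bigr _ (fun S _ => sum_coins S)) exchange_big pair_bigA.
  by apply: eq_bigr => -[].
rewrite sum_set_prod (bigD1 x) //= {1}/G eqxx.
under eq_bigr do rewrite mulr1.
rewrite sum_bernoulli_w mul1r; apply: eq_bigr => y yx.
rewrite /G yx /L exchange_big /=; apply: eq_bigr => s _.
by rewrite mulr_sumr; apply: eq_bigr => e _; ring.
Qed.

Lemma sbm_mass_sum1 : \sum_(om : Om) sbm_mass r q beta om = 1.
Proof.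
transitivity
  (\sum_(f : {ffun V * V -> bool}) \sum_(S : {set V}) sbm_mass r q beta (f, S)).
  by rewrite pair_bigA; apply: eq_bigr => -[].
under eq_bigr do under eq_bigr do rewrite sbm_massE /=.
rewrite -big_distrlr /= -(bigA_distr_bigA coin_w).
rewrite (@sum_set_prod _ _ (fun=> bernoulli_w beta)).
rewrite big1 ?mul1r => [|p _]; first by apply: big1 => y _; exact: sum_bernoulli_w.
by rewrite /coin_w; case: (p.1 < p.2)%N; rewrite ?sum_bernoulli_w // big_bool /= add0r.
Qed.

Hypotheses (r01 : 0 < r < 1) (q01 : 0 < q < 1) (beta01 : 0 < beta < 1).

Lemma bernoulli_w_ge0 p b : 0 <= p <= 1 -> 0 <= bernoulli_w p b.
Proof. by case/andP=> p0 p1; case: b => //=; rewrite subr_ge0. Qed.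

Lemma edge_prob_01 x y : 0 <= edge_prob x y <= 1.
Proof.
by rewrite /edge_prob; case: ifP => _; [case/andP: r01 | case/andP: q01] => *;
  rewrite !ltW.
Qed.

Lemma sbm_mass_ge0 (om : Om) : 0 <= sbm_mass r q beta om.
Proof.
have beta01' : 0 <= beta <= 1 by case/andP: beta01 => *; apply/andP; split; apply: ltW.
rewrite sbm_massE mulr_ge0 //; apply: prodr_ge0 => p _; last exact: bernoulli_w_ge0.
by rewrite /coin_w; case: ifP => _; [exact/bernoulli_w_ge0/edge_prob_01 | case: (om.1 p)].
Qed.

Definition nbrs (x : V) (c : V -> bool -> bool) (om : Om) : R :=
  \sum_(y | y != x) (edge om x y && c y (y \in om.2))%:R.

Definition nbrs_mean (x : V) (c : V -> bool -> bool) : R :=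
  \sum_(y | y != x)
    edge_prob x y * (beta * (c y true)%:R + (1 - beta) * (c y false)%:R).

Lemma nbrs_ge0 (om : Om) x c : 0 <= nbrs x c om.
Proof. by apply: sumr_ge0 => y _; rewrite ler0n. Qed.

Lemma nbrs_le (om : Om) x (c c' : V -> bool -> bool) :
  (forall y l, c y l -> c' y l) -> nbrs x c om <= nbrs x c' om.
Proof.
move=> cc'; apply: ler_sum => y _; rewrite ler_nat.
by case: (c y _) (cc' y (y \in om.2)) => [->|]; rewrite ?andbT ?andbF.
Qed.

Lemma nbrs_prob_01 x y (c : bool -> bool) :
  0 <= edge_prob x y * (beta * (c true)%:R + (1 - beta) * (c false)%:R) <= 1.
Proof.
have /andP[p0 p1] := edge_prob_01 x y; case/andP: beta01 => b0 b1.
by case: (c true); case: (c false); rewrite /= ?mulr1 ?mulr0 ?addr0 ?add0r;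
  apply/andP; split; nra.
Qed.

Lemma nbrs_mean_ge0 x c : 0 <= nbrs_mean x c.
Proof. by apply: sumr_ge0 => y _; case/andP: (nbrs_prob_01 x y (c y)). Qed.

Lemma nbrs_mgf x c s :
  \sum_om sbm_mass r q beta om * expR (s * nbrs x c om)
  <= expR ((expR s - 1) * nbrs_mean x c).
Proof.
under eq_bigr => om _ do rewrite /nbrs mulr_sumr expR_sum.
rewrite (sbm_expect_prod x (fun y e l => expR (s * (e && c y l)%:R))).
rewrite /nbrs_mean mulr_sumr expR_sum; apply: ler_prod => y _.
have /andP[p0 p1] := nbrs_prob_01 x y (c y).
set p := edge_prob x y * _ in p0 p1 *.
have -> : \sum_e \sum_l bernoulli_w (edge_prob x y) e * bernoulli_w beta l *
    expR (s * (e && c y l)%:R) = 1 + p * (expR s - 1).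
  rewrite /p !big_bool /=.
  by case: (c y true); case: (c y false); rewrite /= ?mulr0 ?mulr1 ?expR0; ring.
have := expR_gt0 s; rewrite mulrC expR_ge1Dx andbT; nra.
Qed.

Lemma nbrs_upper_tail x c d : 0 <= d ->
  \sum_(om | (1 + d) * nbrs_mean x c <= nbrs x c om) sbm_mass r q beta om
  <= expR (- (nbrs_mean x c * d ^+ 2 / (2 * (1 + d / 3)))).
Proof. exact: (chernoff_upper sbm_mass_ge0 (nbrs_mean_ge0 x c) (nbrs_mgf x c)). Qed.

Lemma nbrs_lower_tail x c d : 0 <= d ->
  \sum_(om | nbrs x c om <= (1 - d) * nbrs_mean x c) sbm_mass r q beta om
  <= expR (- (nbrs_mean x c * d ^+ 2 / 4)).
Proof. exact: (chernoff_lower sbm_mass_ge0 (nbrs_mean_ge0 x c) (nbrs_mgf x c)). Qed.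
End SBM.

Section Blocks.
Variables (R : realType) (N0 N1 : nat) (r q beta : R).
Local Notation V := 'I_(N0 + N1).
Local Notation Om := (Omega (N0 + N1)).

Lemma sum_blk (G : bool -> R) :
  \sum_(y : V) G (blk y) = \sum_j (Nb N0 N1 j)%:R * G j.
Proof.
rewrite -(big_mkord xpredT (fun i => G (N0 <= i)%N)).
rewrite (big_cat_nat _ (leq_addr N1 N0)) //=.
rewrite (@eq_big_nat _ _ _ 0 N0 _ (fun=> G false)) => [|i /andP[_ iN0]]; last first.
  by rewrite leqNgt iN0.
rewrite (@eq_big_nat _ _ _ N0 (N0 + N1) _ (fun=> G true)) => [|i /andP[N0i _]];
  last first.
  by rewrite N0i.
by rewrite !sumr_const_nat subn0 addKn big_bool /= !mulr_natl addrC.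
Qed.

Lemma nbrs_mean_blk (x : V) (c : bool -> bool -> bool) :
  let B j := (if blk x == j then r else q) *
             (beta * (c j true)%:R + (1 - beta) * (c j false)%:R) in
  nbrs_mean r q beta x (fun y => c (blk y)) = \sum_j (Nb N0 N1 j)%:R * B j - B (blk x).
Proof. by move=> B; rewrite -(sum_blk B) (bigD1 x) //= addrC addrK. Qed.

Lemma nbrs_mean_other (x : V) :
  nbrs_mean r q beta x (fun y _ => blk y != blk x) = q * (Nb N0 N1 (~~ blk x))%:R.
Proof.
by rewrite (nbrs_mean_blk x (fun j _ => j != blk x)) big_bool; case: (blk x) => /=; ring.
Qed.

Lemma nbrs_mean_same (x : V) :
  nbrs_mean r q beta x (fun y _ => blk y == blk x) = r * ((Nb N0 N1 (blk x))%:R - 1).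
Proof.
by rewrite (nbrs_mean_blk x (fun j _ => j == blk x)) big_bool; case: (blk x) => /=; ring.
Qed.

Lemma nbrs_mean_same_labeled (x : V) :
  nbrs_mean r q beta x (fun y l => (blk y == blk x) && l) =
  r * beta * ((Nb N0 N1 (blk x))%:R - 1).
Proof.
rewrite (nbrs_mean_blk x (fun j l => (j == blk x) && l)) big_bool.
by case: (blk x) => /=; ring.
Qed.

Lemma sum_wt_nbrs (om : Om) (x : V) (c : V -> bool -> bool) :
  \sum_(y | c y (y \in om.2)) wt R om x y = nbrs R x c om.
Proof.
rewrite big_mkcond (bigD1 x) //= {1}/wt /edge ltnn if_same add0r.
by apply: eq_bigr => y _; rewrite /wt; case: (c y _); rewrite ?andbT ?andbF.
Qed.
End Blocks.

Lemma ler_frac_add (R : realFieldType) (a b a' b' : R) :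
  0 <= a <= a' -> 0 <= b' <= b -> 0 < a' -> a / (a + b) <= a' / (a' + b').
Proof.
case/andP=> a0 aa' /andP[b'0 b'b] a'0.
have [->|ab_neq0] := eqVneq (a + b) 0; first by rewrite invr0 mulr0; apply: divr_ge0; lra.
have ab_gt0 : 0 < a + b by rewrite lt_def ab_neq0 addr_ge0 // (le_trans b'0).
by rewrite ler_pdivrMr // mulrAC ler_pdivlMr ?ltr_wpDr //; nra.
Qed.

Section TailEvents.
Variables (R : realType) (N0 N1 : nat) (r q beta s1 s2 : R).
Hypotheses (N0_ge2 : (2 <= N0)%N) (N1_ge2 : (2 <= N1)%N).
Hypotheses (r01 : 0 < r < 1) (q01 : 0 < q < 1) (beta01 : 0 < beta < 1).
Hypotheses (s1_ge0 : 0 <= s1) (s2_01 : 0 <= s2 < 1).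
Local Notation V := 'I_(N0 + N1).
Local Notation Om := (Omega (N0 + N1)).
Local Notation other x := (fun y (_ : bool) => blk y != blk x).
Local Notation same x := (fun y (_ : bool) => blk y == blk x).
Local Notation same_labeled x := (fun y l => (blk y == blk x) && l).
Local Notation mean := (nbrs_mean r q beta).
Local Notation N j := (Nb N0 N1 j)%:R.

Definition tail_event (x : V) (om : Om) : bool :=
  [|| (1 + s1) * mean x (other x) <= nbrs R x (other x) om,
      nbrs R x (same x) om <= (1 - s2) * mean x (same x),
      (1 + s2) * mean x (same x) <= nbrs R x (same x) om
    | nbrs R x (same_labeled x) om <= (1 - s2) * mean x (same_labeled x)].

Lemma Nb_ge2 j : 2 <= N j :> R.
Proof. by rewrite (ler_nat R 2); case: j. Qed.

Lemma not_tail_event_ratio_bounds (x : V) (om : Om) : ~~ tail_event x om ->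
  (gammai R om x <= (1 + s1) * q * N (~~ blk x)
                    / ((1 + s1) * q * N (~~ blk x) + (1 - s2) * r * (N (blk x) - 1)))
  && ((1 - s2) / (1 + s2) * beta <= betai R om x).
Proof.
rewrite !negb_or -!ltNge nbrs_mean_other nbrs_mean_same nbrs_mean_same_labeled.
case/and4P=> C_lt W_gt W_lt L_gt.
rewrite /gammai /betai [in X in _ / X <= _](bigID (fun y => blk y == blk x)) /= addrC.
rewrite (sum_wt_nbrs R om x (other x)) (sum_wt_nbrs R om x (same x)).
rewrite (sum_wt_nbrs R om x (same_labeled x)).
case/andP: r01 => r0 _; case/andP: q01 => q0 _; case/andP: beta01 => b0 _.
case/andP: s2_01 => s2_ge0 s2_lt1.
have N_gt1 : 1 < N (blk x) :> R by apply: lt_le_trans (Nb_ge2 _); rewrite ltr1n.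
have N'_gt0 : 0 < N (~~ blk x) :> R by apply: lt_le_trans (Nb_ge2 _).
apply/andP; split.
  apply: ler_frac_add.
  - by rewrite nbrs_ge0 -mulrA ltW.
  - apply/andP; split; last by rewrite -mulrA ltW.
    by rewrite !mulr_ge0 ?subr_ge0 ?ltW.
  - by rewrite !mulr_gt0 // ltr_wpDr.
have W_gt0 : 0 < nbrs R x (same x) om.
  by apply: le_lt_trans W_gt; rewrite !mulr_ge0 ?subr_ge0 ?ltW.
rewrite ler_pdivlMr // (le_trans _ (ltW L_gt)) //.
have -> : (1 - s2) * (r * beta * (N (blk x) - 1)) =
    (1 - s2) / (1 + s2) * beta * ((1 + s2) * (r * (N (blk x) - 1))).
  by field; lra.
apply: ler_wpM2l (ltW W_lt).
by rewrite mulr_ge0 ?(ltW b0) // divr_ge0 ?subr_ge0 ?(ltW s2_lt1) // addr_ge0.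
Qed.

Lemma tail_event_prob (x : V) :
  \sum_(om | tail_event x om) sbm_mass r q beta om
  <= expR (- (q * N (~~ blk x) * s1 ^+ 2 / (2 * (1 + s1 / 3))))
     + 3 * expR (- (beta * r * N (blk x) * s2 ^+ 2 / 8)).
Proof.
have mass_ge0 : forall om : Om, 0 <= sbm_mass r q beta om := sbm_mass_ge0 r01 q01 beta01.
case/andP: r01 => r0 _; case/andP: beta01 => b0 b1; case/andP: s2_01 => s2_ge0 s2_lt1.
have N_ge2 : 2 <= N (blk x) :> R := Nb_ge2 _.
set e := expR (- (beta * r * N (blk x) * s2 ^+ 2 / 8)).
have lower_le mu : beta * r * N (blk x) / 2 <= mu -> expR (- (mu * s2 ^+ 2 / 4)) <= e.
  move=> mu_ge; rewrite ler_expR lerN2.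
  have := ler_wpM2r (sqr_ge0 s2) mu_ge; lra.
have upper_le mu : beta * r * N (blk x) / 2 <= mu ->
    expR (- (mu * s2 ^+ 2 / (2 * (1 + s2 / 3)))) <= e.
  move=> mu_ge; apply: le_trans (lower_le _ mu_ge); rewrite ler_expR lerN2.
  have mu_ge0 : 0 <= mu.
    by apply: le_trans mu_ge; rewrite !divr_ge0 ?mulr_ge0 ?ltW //; lra.
  by apply: ler_wpM2l; rewrite ?mulr_ge0 ?sqr_ge0 // lef_pV2 ?posrE; lra.
have rN_ge0 : 0 <= r * N (blk x) by rewrite mulr_ge0 // ltW.
have mean_same_ge : beta * r * N (blk x) / 2 <= r * (N (blk x) - 1) by nra.
have rb_ge0 : 0 <= r * beta by rewrite mulr_ge0 // ltW.
have mean_labeled_ge : beta * r * N (blk x) / 2 <= r * beta * (N (blk x) - 1) by nra.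
rewrite /tail_event (_ : 3 * e = e + (e + e)); last by ring.
apply: le_trans (sum_mass_orU mass_ge0 _ _) (lerD _ _).
  apply: le_trans (nbrs_upper_tail r01 q01 beta01 x (other x) s1_ge0) _.
  by rewrite nbrs_mean_other.
apply: le_trans (sum_mass_orU mass_ge0 _ _) (lerD _ _).
  apply: le_trans (nbrs_lower_tail r01 q01 beta01 x (same x) s2_ge0) _.
  by rewrite nbrs_mean_same lower_le.
apply: le_trans (sum_mass_orU mass_ge0 _ _) (lerD _ _).
  apply: le_trans (nbrs_upper_tail r01 q01 beta01 x (same x) s2_ge0) _.
  by rewrite nbrs_mean_same upper_le.
apply: le_trans (nbrs_lower_tail r01 q01 beta01 x (same_labeled x) s2_ge0) _.
by rewrite nbrs_mean_same_labeled lower_le.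
Qed.
End TailEvents.

Theorem mainTheorem10 (R : realType) (N0 N1 : nat) (r q beta s1 s2 : R) :
  (2 <= N0)%N -> (2 <= N1)%N ->
  0 < r < 1 -> 0 < q < 1 -> 0 < beta < 1 ->
  0 <= s1 -> 0 <= s2 < 1 ->
  1 - \sum_(j : bool)
        (Nb N0 N1 j)%:R *
        (expR (- ((q * (Nb N0 N1 (~~ j))%:R * s1 ^+ 2) / (2 * (1 + s1 / 3))))
         + 3 * expR (- (beta * r * (Nb N0 N1 j)%:R * s2 ^+ 2 / 8)))
  <= sbm_prob r q beta
       (fun om => [forall x : 'I_(N0 + N1),
          (gammai R om x <=
             ((1 + s1) * q * (Nb N0 N1 (~~ blk x))%:R)
             / ((1 + s1) * q * (Nb N0 N1 (~~ blk x))%:R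
                + (1 - s2) * r * ((Nb N0 N1 (blk x))%:R - 1)))
          && (betai R om x >= (1 - s2) / (1 + s2) * beta)]).
Proof.
move=> N0_ge2 N1_ge2 r01 q01 beta01 s1_ge0 s2_01.
set good := (fun om => [forall x, _]).
have mass_ge0 : forall om : Omega (N0 + N1), 0 <= sbm_mass r q beta om.
  exact: sbm_mass_ge0.
have -> : sbm_prob r q beta good = 1 - \sum_(om | ~~ good om) sbm_mass r q beta om.
  by rewrite /sbm_prob -(sbm_mass_sum1 N0 N1 r q beta) [in RHS](bigID good) /= addrK.
rewrite lerD2l lerN2.
apply: le_trans (@sum_mass_subset _ _ _ mass_ge0 _
  (fun om => [exists x, tail_event r q beta s1 s2 x om]) _) _.
  move=> om /forallPn[x good_x]; apply/existsP; exists x.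
  by apply: contraNT good_x; exact: not_tail_event_ratio_bounds.
apply: le_trans (sum_mass_existsU mass_ge0 _) _.
apply: le_trans (ler_sum _ (fun x _ => tail_event_prob N0_ge2 N1_ge2
  r01 q01 beta01 s1_ge0 s2_01 x)) _.
by rewrite -sum_blk.
Qed.
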